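(* Let $R$ be an integral domain and $M=\begin{pmatrix}a&b\\c&d\end{pmatrix}$ a $2\times2$ matrix over $R$. The map $S\colon R^2\to R^2$ given by left multiplication by $M$ on column vectors is a solution of the Yang--Baxter equation on $R$ if and only if $M$ has at least one of the following forms (for some $b,c\in R$): $$\begin{pmatrix}1-bc&b\\c&0\end{pmatrix},\quad \begin{pmatrix}0&b\\c&1-bc\end{pmatrix},\quad \begin{pmatrix}0&b\\c&0\end{pmatrix},\quad \begin{pmatrix}1&0\\0&1\end{pmatrix}.$$
   Context: For a nonempty set $X$, a map $S\colon X^2\to X^2$ is a solution of the Yang--Baxter equation on $X$ if $S_1S_2S_1=S_2S_1S_2$ as maps $X^3\to X^3$, where $S_1=S\times\mathrm{Id}$ and $S_2=\mathrm{Id}\times S$. *)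

From mathcomp Require Import all_boot all_algebra.
Set Implicit Arguments. Unset Strict Implicit. Unset Printing Implicit Defensive.
Import GRing.Theory.
Local Open Scope ring_scope.

Definition S1 (X : Type) (S : X * X -> X * X) (t : X * X * X) : X * X * X :=
  let: (x, y, z) := t in let: (x', y') := S (x, y) in (x', y', z).
Definition S2 (X : Type) (S : X * X -> X * X) (t : X * X * X) : X * X * X :=
  let: (x, y, z) := t in let: (y', z') := S (y, z) in (x, y', z').
Definition is_YBE_solution (X : Type) (S : X * X -> X * X) : Prop :=
  forall t : X * X * X, S1 S (S2 S (S1 S t)) = S2 S (S1 S (S2 S t)).

Definition col2 (R : nzRingType) (x y : R) : 'cV[R]_2 :=
  \col_(i < 2) (if i == ord0 then x else y).
Definition mx_map (R : nzRingType) (M : 'M[R]_2) (v : R * R) : R * R :=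
  let w := M *m col2 v.1 v.2 in (w ord0 ord0, w (@Ordinal 2 1 isT) ord0).

Definition mx2 (R : nzRingType) (a b c d : R) : 'M[R]_2 :=
  \matrix_(i < 2, j < 2)
    (if i == ord0 then (if j == ord0 then a else b)
     else (if j == ord0 then c else d)).

From mathcomp Require Import all_boot all_algebra ring.
Set Implicit Arguments.
Unset Strict Implicit.
Local Open Scope ring_scope.
Import GRing.Theory.

(* For S(x, y) = (ax + by, cx + dy) the difference S1 S2 S1 - S2 S1 S2 is
   linear in (x, y, z), so S solves the Yang--Baxter equation iff its five
   coefficients a(a + bc - 1), abd, acd, ad(d - a), d(d + bc - 1) vanish.
   Over a domain the first and last force a, d in {0, 1 - bc}; if moreover
   a and d are both nonzero, then d = a, and abd = acd = 0 gives b = c = 0,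
   hence a = d = 1. *)

Lemma mx_map_mx2 (R : nzRingType) (a b c d x y : R) :
  mx_map (mx2 a b c d) (x, y) = (a * x + b * y, c * x + d * y).
Proof. by rewrite /mx_map /mx2 /col2 !mxE !big_ord_recl !big_ord0 !mxE /= !addr0. Qed.

Lemma mx2_surj (R : nzRingType) (M : 'M[R]_2) :
  exists a b c d, M = mx2 a b c d.
Proof.
exists (M ord0 ord0), (M ord0 ord_max), (M ord_max ord0), (M ord_max ord_max).
apply/matrixP => i j; rewrite !mxE.
by case: i => [[|[|i]] ?]; case: j => [[|[|j]] ?] //=; congr (M _ _); apply: val_inj.
Qed.

Lemma mx2_inj (R : nzRingType) (a b c d a' b' c' d' : R) :
  mx2 a b c d = mx2 a' b' c' d' -> [/\ a = a', b = b', c = c' & d = d'].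
Proof.
move/matrixP=> eM.
move: (eM ord0 ord0) (eM ord0 ord_max) (eM ord_max ord0) (eM ord_max ord_max).
by rewrite !mxE.
Qed.

Definition mx2_ybe_eqs (R : comNzRingType) (a b c d : R) : Prop :=
  [/\ a * (a + b * c - 1) = 0, a * b * d = 0, a * c * d = 0,
      a * d * (d - a) = 0 & d * (d + b * c - 1) = 0].

Section LinearYBE.
Variables (R : comNzRingType) (a b c d : R) (S : R * R -> R * R).
Hypothesis SE : forall x y, S (x, y) = (a * x + b * y, c * x + d * y).

Lemma braid_defect x y z :
  S1 S (S2 S (S1 S (x, y, z))) - S2 S (S1 S (S2 S (x, y, z))) =
  (a * (a + b * c - 1) * x + a * b * d * y,
   a * c * d * x + a * d * (d - a) * y - a * b * d * z,
   - (a * c * d * y) - d * (d + b * c - 1) * z).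
Proof. by rewrite /S1 /S2 !SE /=; congr (_, _, _); rewrite /=; ring. Qed.

Lemma linear_YBE_solutionP : is_YBE_solution S <-> mx2_ybe_eqs a b c d.
Proof.
split=> [ybe | [e1 e2 e3 e4 e5] [[x y] z]]; last first.
  apply: subr0_eq; rewrite braid_defect e1 e2 e3 e4 e5.
  by rewrite !mul0r !(addr0, subr0, oppr0).
have defect0 x y z :
    S1 S (S2 S (S1 S (x, y, z))) - S2 S (S1 S (S2 S (x, y, z))) = (0, 0, 0).
  by rewrite ybe subrr.
(* Evaluate at the basis vectors; injection drops the components that
   simplify to 0 = 0. *)
have simp := (mulr0, mulr1, addr0, add0r, subr0, sub0r, oppr0).
have := defect0 1 0 0; rewrite braid_defect !simp => -[e1 e3].
have := defect0 0 1 0; rewrite braid_defect !simp => -[e2 e4 _].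
have := defect0 0 0 1; rewrite braid_defect !simp => -[_ /eqP].
by rewrite oppr_eq0 => /eqP e5; split.
Qed.
End LinearYBE.

Lemma mulr_addB1_eq0 (R : idomainType) (x s : R) :
  x * (x + s - 1) = 0 -> x = 0 \/ x = 1 - s.
Proof.
move/eqP; rewrite mulf_eq0 => /orP[/eqP-> | ]; first by left.
by rewrite subr_eq0 => /eqP <-; right; rewrite addrK.
Qed.

Lemma mx2_ybe_eqsP (R : idomainType) (a b c d : R) :
  mx2_ybe_eqs a b c d <->
  [\/ a = 1 - b * c /\ d = 0, a = 0 /\ d = 1 - b * c, a = 0 /\ d = 0
     | [/\ a = 1, b = 0, c = 0 & d = 1]].
Proof.
split=> [[e1 e2 e3 e4 e5] | ]; last first.
  by case=> [[-> ->] | [-> ->] | [-> ->] | [-> -> -> ->]]; split; ring.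
have [a0 | a_neq0] := eqVneq a 0.
  by case: (mulr_addB1_eq0 e5) => ->; [constructor 3 | constructor 2].
have ea : a = 1 - b * c.
  by case: (mulr_addB1_eq0 e1) => // a0; rewrite a0 eqxx in a_neq0.
have [d0 | d_neq0] := eqVneq d 0; first by constructor 1.
have cancel_ad := (mulf_eq0, negbTE a_neq0, negbTE d_neq0, orbF).
have /eqP := e4; rewrite !cancel_ad subr_eq0 => /eqP da.
have /eqP := e2; rewrite !cancel_ad => /eqP b0.
have /eqP := e3; rewrite !cancel_ad => /eqP c0.
have a1 : a = 1 by rewrite ea b0 mul0r subr0.
by constructor 4; rewrite da.
Qed.

Theorem theorem5p10 (R : idomainType) (M : 'M[R]_2) :
  is_YBE_solution (mx_map M) <->
  exists b c : R,
    M = mx2 (1 - b * c) b c 0 \/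
    M = mx2 0 b c (1 - b * c) \/
    M = mx2 0 b c 0 \/
    M = mx2 1 0 0 1.
Proof.
have [a [b [c [d ->]]]] := mx2_surj M.
rewrite (linear_YBE_solutionP (mx_map_mx2 a b c d)) mx2_ybe_eqsP.
split=> [[[-> ->] | [-> ->] | [-> ->] | [-> -> -> ->]] | [b' [c' eM]]].
- by exists b, c; left.
- by exists b, c; right; left.
- by exists b, c; do 2 right; left.
- by exists 0, 0; do 3 right.
by case: eM => [|[|[|]]] /mx2_inj[-> -> -> ->];
  [constructor 1 | constructor 2 | constructor 3 | constructor 4].
Qed.
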